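(* Let $0<\alpha<1$. Let $P,Q$ be probability measures on $\mathbb{R}^d$, both absolutely continuous with respect to a probability measure $\mu$. Let $\mathbf{x}_1,\dots,\mathbf{x}_N\in\mathbb{R}^d$ with $q_i:=\frac{dQ}{d\mu}(\mathbf{x}_i)>0$ and $p_i:=\frac{dP}{d\mu}(\mathbf{x}_i)>0$ for $1\le i\le N$. For $L>0$ let $I_L^i=[-L-\log\frac{q_i}{p_i},\,L-\log\frac{q_i}{p_i}]$ and define $f^{(N)}:I_L^1\times\cdots\times I_L^N\to\mathbb{R}$ by $$f^{(N)}(\mathbf{t})=f^{(N)}(t_1,\dots,t_N)=\frac{1}{\alpha}\frac{1}{N}\sum_{i=1}^N e^{\alpha t_i}q_i+\frac{1}{1-\alpha}\frac{1}{N}\sum_{i=1}^N e^{(\alpha-1)t_i}p_i .$$ Let $\frac{\lambda}{2}=\frac{1}{N}\min_{1\le i\le N}\big\{e^{-L}q_i^{1-\alpha}p_i^{\alpha}\big\}$. Then for all $\mathbf{t}$ in the domain, $$\mathbf{t}^{T}\,\nabla^2 f^{(N)}(\mathbf{t})\,\mathbf{t}=\sum_{1\le i,j\le N}t_it_j\frac{\partial^2 f^{(N)}}{\partial t_i\partial t_j}(\mathbf{t})\ge\frac{\lambda}{2}\|\mathbf{t}\|^2 .$$ Moreover, with $D_i=2e^{L}q_i^{1-\alpha}p_i^{\alpha}$ and $D=\max\{D_1,\dots,D_N\}$, we have $\|\nabla f^{(N)}(\mathbf{t})\|^2\le D^2$ for all $\mathbf{t}\in I_L^1\times\cdots\times I_L^N$,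 and $f^{(N)}$ is minimized at $\mathbf{t}_*=(-\log\frac{q_1}{p_1},\dots,-\log\frac{q_N}{p_N})$.
   Context: $\|\cdot\|$ is the Euclidean norm; $\frac{dQ}{d\mu},\frac{dP}{d\mu}$ are Radon–Nikodým derivatives. *)

From HB Require Import structures.
From mathcomp Require Import all_boot all_order all_algebra.
From mathcomp Require Import all_classical all_reals all_analysis.
Set Implicit Arguments. Unset Strict Implicit. Unset Printing Implicit Defensive.
Import Order.TTheory GRing.Theory Num.Theory.
Import numFieldNormedType.Exports.
Local Open Scope ring_scope.

Definition rcoord (R : realType) (N : nat) (t : 'rV[R]_N) (i : 'I_N) : R := t ord0 i.

Definition basis_vec (R : realType) (N : nat) (i : 'I_N) : 'rV[R]_N := delta_mx 0 i.

Definition fN (R : realType) (N : nat) (alpha : R) (q p : 'I_N -> R)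
    (t : 'rV[R]_N) : R :=
  alpha^-1 * (N%:R)^-1 * (\sum_(i < N) expR (alpha * rcoord t i) * q i)
  + (1 - alpha)^-1 * (N%:R)^-1 * (\sum_(i < N) expR ((alpha - 1) * rcoord t i) * p i).

Definition partial (R : realType) (N : nat) (f : 'rV[R]_N -> R) (i : 'I_N)
    (t : 'rV[R]_N) : R := derive f t (@basis_vec R N i).

Definition partial2 (R : realType) (N : nat) (f : 'rV[R]_N -> R) (i j : 'I_N)
    (t : 'rV[R]_N) : R := partial (partial f j) i t.

Definition sqnorm (R : realType) (N : nat) (t : 'rV[R]_N) : R :=
  \sum_(i < N) rcoord t i ^+ 2.

Definition box (R : realType) (N : nat) (L : R) (q p : 'I_N -> R) : set 'rV[R]_N :=
  [set t | forall i : 'I_N,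
     - L - ln (q i / p i) <= rcoord t i <= L - ln (q i / p i)].

From HB Require Import structures.
From mathcomp Require Import all_boot all_order all_algebra.
From mathcomp Require Import all_classical all_reals all_analysis.
From mathcomp Require Import ring lra.
Import Order.TTheory GRing.Theory Num.Theory.
Import numFieldNormedType.Exports.
Local Open Scope classical_set_scope.
Local Open Scope ring_scope.

(* With c_i = q_i^(1-alpha) p_i^alpha and s_i = t_i + log (q_i / p_i) one has
   e^(alpha t_i) q_i = c_i e^(alpha s_i) and e^((alpha-1) t_i) p_i = c_i e^((alpha-1) s_i),
   so f^(N)(t) = (1/N) sum_i c_i phi(s_i) with
   phi(u) = e^(alpha u) / alpha + e^((alpha-1) u) / (1 - alpha).
   Being separable, f^(N) has a diagonal Hessian with entries c_i phi''(s_i) / N and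
   gradient entries c_i phi'(s_i) / N.  On the box |s_i| <= L, so e^(alpha s_i) and
   e^((alpha-1) s_i) both lie in [e^-L, e^L]: phi'' is a convex combination of them,
   hence >= e^-L, and |phi'| <= e^L.  Finally phi(u) >= phi(0) by e^x >= 1 + x, and
   s = 0 exactly at t_*. *)

Lemma is_derive_line {R : numFieldType} {V W : normedModType R} (f : V -> W)
    (x v : V) (df : W) :
  is_derive (0 : R) 1 (fun h : R => f (h *: v + x)) df -> is_derive x v f df.
Proof.
move=> [dg <-]; split; first exact/derivable1P.
rewrite /derive; set g1 := fun h => h^-1 *: _; set g2 := fun h => h^-1 *: _.
suff -> : g1 = g2 by [].
by apply/funext => h; rewrite /g1 /g2 /= scale0r add0r addr0 [_%:A]mulr1.
Qed.

Lemma rcoord_line {R : realType} {N : nat} (t : 'rV[R]_N) i j (h : R) :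
  rcoord (h *: basis_vec R i + t) j = (if i == j then h + rcoord t j else rcoord t j).
Proof.
rewrite /rcoord /basis_vec !mxE eqxx eq_sym.
by case: eqP => _; rewrite ?mulr1 ?mulr0 ?add0r.
Qed.

Lemma is_derive_rcoord {R : realType} {N : nat} {g : R -> R} {t : 'rV[R]_N} i {j} {d : R} :
  is_derive (rcoord t j) 1 g d ->
  is_derive t (basis_vec R i) (fun s => g (rcoord s j)) (if i == j then d else 0).
Proof.
move=> dg; apply: is_derive_line; case: eqVneq dg => [<- dg|ij dg].
  have -> : (fun h => g (rcoord (h *: basis_vec R i + t) i)) = g \o shift (rcoord t i).
    by apply/funext => h; rewrite rcoord_line eqxx.
  rewrite -(add0r (rcoord t i)) in dg.
  have := @is_derive1_comp _ g (shift (rcoord t i)) 0 d 1 dg (is_derive_shift _ _ _).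
  by rewrite mulr1.
have -> : (fun h => g (rcoord (h *: basis_vec R i + t) j)) = cst (g (rcoord t j)).
  by apply/funext => h; rewrite rcoord_line (negbTE ij).
exact: is_derive_cst.
Qed.

Lemma partial_rcoord {R : realType} {N : nat} {g : R -> R} {t : 'rV[R]_N} i {j} {d : R} :
  is_derive (rcoord t j) 1 g d ->
  partial (fun s => g (rcoord s j)) i t = if i == j then d else 0.
Proof. by move=> dg; have [] := is_derive_rcoord i dg. Qed.

Lemma partial_sum_rcoord {R : realType} {N : nat} (g : 'I_N -> R -> R) (d : 'I_N -> R)
    (t : 'rV[R]_N) i :
  (forall k, is_derive (rcoord t k) 1 (g k) (d k)) ->
  partial (fun s => \sum_k g k (rcoord s k)) i t = d i.
Proof.
move=> dg; have := is_derive_sum (fun k => is_derive_rcoord i (dg k)).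
rewrite -big_mkcond fct_sumE (big_pred1 i) => [[_ //]|k].
exact: eq_sym.
Qed.

Lemma is_derive_expRM {R : realType} (a x : R) :
  is_derive x 1 (fun u => expR (a * u)) (a * expR (a * x)).
Proof.
have da : is_derive x 1 ( *%R a) a.
  by apply: is_derive_eq (is_deriveZ a (is_derive_id x 1)) _; rewrite /GRing.scale /= mulr1.
by apply: is_derive_eq (is_derive1_comp (is_derive_expR (a * x)) da) _; rewrite mulrC.
Qed.

Lemma is_derive_scale_shift {R : realType} {g : R -> R} (w : R) {l x d : R} :
  is_derive (x + l) 1 g d -> is_derive x 1 (fun s => w * g (s + l)) (w * d).
Proof.
move=> dg; have := is_deriveZ w (@is_derive1_comp _ g (shift l) x d 1 dg (is_derive_shift _ _ _)).
by rewrite mulr1.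
Qed.

Lemma expRM_within {R : realType} (a L u : R) :
  -1 <= a <= 1 -> -L <= u <= L -> expR (- L) <= expR (a * u) <= expR L.
Proof. by move=> /andP[? ?] /andP[? ?]; rewrite !ler_expR; apply/andP; split; nra. Qed.

Section AlphaPhi.
Context {R : realType} (alpha : R).

Definition alpha_phi (u : R) : R :=
  alpha^-1 * expR (alpha * u) + (1 - alpha)^-1 * expR ((alpha - 1) * u).
Definition alpha_phi' (u : R) : R := expR (alpha * u) - expR ((alpha - 1) * u).
Definition alpha_phi'' (u : R) : R :=
  alpha * expR (alpha * u) + (1 - alpha) * expR ((alpha - 1) * u).

Hypothesis halpha : 0 < alpha < 1.

Let alpha_neq0 : alpha != 0. Proof. by case/andP: halpha => /gt_eqF ->. Qed.
Let onem_alpha_neq0 : 1 - alpha != 0.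
Proof. by rewrite subr_eq0 eq_sym; case/andP: halpha => _ /lt_eqF ->. Qed.

Lemma is_derive_alpha_phi (u : R) : is_derive u 1 alpha_phi (alpha_phi' u).
Proof.
apply: is_derive_eq (is_deriveD (is_deriveZ alpha^-1 (is_derive_expRM alpha u))
  (is_deriveZ (1 - alpha)^-1 (is_derive_expRM (alpha - 1) u))) _.
by rewrite /alpha_phi' /GRing.scale /=; field; rewrite alpha_neq0 onem_alpha_neq0.
Qed.

Lemma is_derive_alpha_phi' (u : R) : is_derive u 1 alpha_phi' (alpha_phi'' u).
Proof.
apply: is_derive_eq (is_deriveB (is_derive_expRM alpha u)
  (is_derive_expRM (alpha - 1) u)) _.
by rewrite /alpha_phi'' -[alpha - 1]opprB mulNr opprK.
Qed.

Lemma alpha_phi_ge (u : R) : alpha_phi 0 <= alpha_phi u.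
Proof.
have [a0 a1] : 0 < alpha /\ alpha < 1 by apply/andP.
have hl : alpha^-1 * (1 + alpha * u) <= alpha^-1 * expR (alpha * u).
  by rewrite ler_pM2l ?invr_gt0 // expR_ge1Dx.
have hr : (1 - alpha)^-1 * (1 + (alpha - 1) * u) <= (1 - alpha)^-1 * expR ((alpha - 1) * u).
  by rewrite ler_pM2l ?invr_gt0 ?subr_gt0 // expR_ge1Dx.
have el : alpha^-1 * (1 + alpha * u) = alpha^-1 + u by field.
have er : (1 - alpha)^-1 * (1 + (alpha - 1) * u) = (1 - alpha)^-1 - u by field.
rewrite /alpha_phi !mulr0 expR0 !mulr1; lra.
Qed.

Let expR_alpha_within (L u : R) : -L <= u <= L ->
  expR (- L) <= expR (alpha * u) <= expR L /\
  expR (- L) <= expR ((alpha - 1) * u) <= expR L.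
Proof.
have [a0 a1] : 0 < alpha /\ alpha < 1 by apply/andP.
by move=> hu; split; apply: expRM_within hu; apply/andP; split; lra.
Qed.

Lemma alpha_phi''_ge {L u : R} : -L <= u <= L -> expR (- L) <= alpha_phi'' u.
Proof.
have [a0 a1] : 0 < alpha /\ alpha < 1 by apply/andP.
move=> /expR_alpha_within[/andP[e1 _] /andP[e2 _]]; rewrite /alpha_phi''; nra.
Qed.

Lemma sqr_alpha_phi'_le {L u : R} : -L <= u <= L -> alpha_phi' u ^+ 2 <= expR L ^+ 2.
Proof.
have eL := expR_gt0 (- L).
move=> /expR_alpha_within[/andP[e1 e1'] /andP[e2 e2']]; rewrite /alpha_phi'; nra.
Qed.
End AlphaPhi.

Lemma expR_shift_log_ratio {R : realType} {x y : R} (a t : R) : 0 < x -> 0 < y ->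
  expR (a * t) * x = expR (a * (t + ln (x / y))) * (x `^ (1 - a) * y `^ a) /\
  expR ((a - 1) * t) * y = expR ((a - 1) * (t + ln (x / y))) * (x `^ (1 - a) * y `^ a).
Proof.
move=> x0 y0; have xpos : x \is Num.pos by rewrite qualifE.
have ypos : y \is Num.pos by rewrite qualifE.
rewrite /powR (gt_eqF x0) (gt_eqF y0) ln_div // -!expRD.
by split; [rewrite -{1}(lnK xpos) | rewrite -{1}(lnK ypos)]; rewrite -expRD; congr expR; ring.
Qed.

Section fN_theory.
Context {R : realType} {N : nat} (alpha : R) (q p : 'I_N -> R).

Definition affinity (i : 'I_N) : R := q i `^ (1 - alpha) * p i `^ alpha.
Definition log_ratio (i : 'I_N) : R := ln (q i / p i).

Lemma affinity_ge0 i : 0 <= affinity i.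
Proof. by rewrite mulr_ge0 ?powR_ge0. Qed.

Hypotheses (hq : forall i, 0 < q i) (hp : forall i, 0 < p i).

Lemma fN_separable : fN alpha q p =
  fun t => \sum_i N%:R^-1 * affinity i * alpha_phi alpha (rcoord t i + log_ratio i).
Proof.
apply/funext => t; rewrite /fN !mulr_sumr -big_split; apply: eq_bigr => i _ /=.
have [-> ->] := expR_shift_log_ratio alpha (rcoord t i) (hq i) (hp i).
by rewrite /alpha_phi /affinity /log_ratio; ring.
Qed.

Hypothesis halpha : 0 < alpha < 1.

Lemma fN_min t : fN alpha q p (\row_i (- log_ratio i)) <= fN alpha q p t.
Proof.
rewrite fN_separable; apply: ler_sum => i _; rewrite /rcoord mxE addNr.
apply: ler_wpM2l; first by rewrite mulr_ge0 ?invr_ge0 ?affinity_ge0.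
exact: alpha_phi_ge.
Qed.

Lemma partial_fN i t : partial (fN alpha q p) i t =
  N%:R^-1 * affinity i * alpha_phi' alpha (rcoord t i + log_ratio i).
Proof.
rewrite fN_separable.
apply: (@partial_sum_rcoord _ _ (fun k s => N%:R^-1 * affinity k * alpha_phi alpha (s + log_ratio k))
  (fun k => N%:R^-1 * affinity k * alpha_phi' alpha (rcoord t k + log_ratio k))) => k.
exact/is_derive_scale_shift/is_derive_alpha_phi.
Qed.

Lemma partial2_fN i j t : partial2 (fN alpha q p) i j t = if i == j then
  N%:R^-1 * affinity i * alpha_phi'' alpha (rcoord t i + log_ratio i) else 0.
Proof.
rewrite /partial2; have -> : partial (fN alpha q p) j =
    (fun s => (fun u => N%:R^-1 * affinity j * alpha_phi' alpha (u + log_ratio j)) (rcoord s j)).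
  by apply/funext => s; rewrite partial_fN.
rewrite (partial_rcoord i (is_derive_scale_shift _ (is_derive_alpha_phi' _ _))).
by case: eqVneq => [->|].
Qed.

Variable L : R.

Lemma box_log_ratio t i : box L q p t -> -L <= rcoord t i + log_ratio i <= L.
Proof. by move=> /(_ i) /andP[lo hi]; rewrite /log_ratio; apply/andP; split; lra. Qed.

Lemma fN_hessian_ge (m : R) t :
  (forall i, m <= N%:R^-1 * (expR (- L) * affinity i)) -> box L q p t ->
  m * sqnorm t <=
    \sum_(i < N) \sum_(j < N) rcoord t i * rcoord t j * partial2 (fN alpha q p) i j t.
Proof.
move=> hm bt; rewrite /sqnorm mulr_sumr; apply: ler_sum => i _.
rewrite (bigD1 i) //= big1 => [|j ji]; last by rewrite partial2_fN eq_sym (negbTE ji) mulr0.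
rewrite addr0 partial2_fN eqxx -expr2 mulrC; apply: ler_wpM2l; first exact: sqr_ge0.
apply: le_trans (hm i) _.
have -> : N%:R^-1 * (expR (- L) * affinity i) = N%:R^-1 * affinity i * expR (- L) by ring.
apply: ler_wpM2l; first by rewrite mulr_ge0 ?invr_ge0 ?affinity_ge0.
exact/alpha_phi''_ge/box_log_ratio.
Qed.

Lemma fN_grad_sqr_le (D : R) t :
  (forall i, 2 * expR L * affinity i <= D) -> box L q p t ->
  \sum_(i < N) partial (fN alpha q p) i t ^+ 2 <= D ^+ 2.
Proof.
move=> hD bt.
have term_le i : partial (fN alpha q p) i t ^+ 2 <= N%:R^-1 * D ^+ 2.
  have N_gt0 : (0 < N)%N by apply: leq_ltn_trans (ltn_ord i).
  have w_le1 : N%:R^-1 <= 1 :> R by rewrite invf_le1 ?ltr0n // ler1n.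
  have w_gt0 : 0 < N%:R^-1 :> R by rewrite invr_gt0 ltr0n.
  have c_ge0 := affinity_ge0 i.
  have eL := expR_gt0 L.
  have := sqr_alpha_phi'_le _ halpha (box_log_ratio t i bt).
  set d := alpha_phi' _ _ => hd.
  have cd_le : (affinity i * d) ^+ 2 <= D ^+ 2.
    have ceL : 0 <= affinity i * expR L <= D.
      by have := hD i; have := mulr_ge0 c_ge0 (ltW eL); nra.
    rewrite exprMn; apply: le_trans (ler_wpM2l (sqr_ge0 _) hd) _; rewrite -exprMn.
    nra.
  rewrite partial_fN -/d -mulrA exprMn.
  nra.
apply: le_trans (ler_sum _ (fun i _ => term_le i)) _.
rewrite sumr_const card_ord -(mulr_natl (N%:R^-1 * D ^+ 2)) mulrA.
have [->|N_neq0] := eqVneq N 0%N; first by rewrite !mul0r sqr_ge0.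
by rewrite mulfV ?mul1r // pnatr_eq0.
Qed.

Lemma box_log_ratio_center : 0 <= L -> box L q p (\row_i (- log_ratio i)).
Proof. by move=> L_ge0 i; rewrite /rcoord mxE /log_ratio; apply/andP; split; lra. Qed.

End fN_theory.

Theorem corollary1 (R : realType) (dim : nat) (n : nat)
  (alpha : R) (halpha : 0 < alpha < 1)
  (mu P Q : probability (dim.-tuple R) R)
  (hPac : P `<< mu) (hQac : Q `<< mu)
  (dPdmu dQdmu : dim.-tuple R -> R)
  (hdP_meas : measurable_fun setT dPdmu) (hdP_ge0 : forall y, 0 <= dPdmu y)
  (hdP : forall A, measurable A -> P A = (\int[mu]_(y in A) (dPdmu y)%:E)%E)
  (hdQ_meas : measurable_fun setT dQdmu) (hdQ_ge0 : forall y, 0 <= dQdmu y)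
  (hdQ : forall A, measurable A -> Q A = (\int[mu]_(y in A) (dQdmu y)%:E)%E)
  (x : 'I_n.+1 -> dim.-tuple R)
  (hq : forall i, 0 < dQdmu (x i)) (hp : forall i, 0 < dPdmu (x i))
  (L : R) (hL : 0 < L) :
  let q := fun i => dQdmu (x i) in
  let p := fun i => dPdmu (x i) in
  let f := fN alpha q p in
  let lambda_half := (n.+1%:R)^-1 *
      \big[Num.min/expR (- L) * q ord0 `^ (1 - alpha) * p ord0 `^ alpha]_(i < n.+1)
         (expR (- L) * q i `^ (1 - alpha) * p i `^ alpha) in
  let Dc := fun i => 2 * expR L * q i `^ (1 - alpha) * p i `^ alpha in
  let D := \big[Num.max/Dc ord0]_(i < n.+1) Dc i in
  let tstar : 'rV[R]_n.+1 := \row_(i < n.+1) (- ln (q i / p i)) in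
  (forall t, box L q p t ->
     \sum_(i < n.+1) \sum_(j < n.+1) rcoord t i * rcoord t j * partial2 f i j t
       >= lambda_half * sqnorm t)
  /\ (forall t, box L q p t ->
     \sum_(i < n.+1) partial f i t ^+ 2 <= D ^+ 2)
  /\ (box L q p tstar /\ forall t, box L q p t -> f tstar <= f t).
Proof.
move=> q p f lambda_half Dc D tstar.
split; [|split; [|split]].
- move=> t bt; apply: fN_hessian_ge => // i.
  apply: ler_wpM2l; first by rewrite invr_ge0 ler0n.
  by rewrite /affinity mulrA; exact: bigmin_le.
- move=> t bt; apply: fN_grad_sqr_le => // i.
  by rewrite /affinity mulrA; exact: le_bigmax.
- exact: box_log_ratio_center (ltW hL).
- by move=> t _; exact: fN_min.
Qed.
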